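(* For every integer $t$, \begin{align*} \sum_{n=1}^\infty\binom{2n}{n}\frac{O_nL_{2n+t}}{12^n}&=\frac{\sqrt3}{2}\bigl(2L_{t+1}\ln\alpha+\sqrt5\,F_{t+1}\ln3\bigr),\\ \sum_{n=1}^\infty\binom{2n}{n}\frac{O_nF_{2n+t}}{12^n}&=\frac{\sqrt{15}}{10}\bigl(2\sqrt5\,F_{t+1}\ln\alpha+L_{t+1}\ln3\bigr), \end{align*} and, for every gibonacci sequence $G_j=G_j(a,b)$, \[ \sum_{n=1}^\infty\binom{2n}{n}\frac{O_nG_{2n+t}}{12^n}=\frac{\sqrt{15}}{10}\bigl(2\sqrt5\,G_{t+1}\ln\alpha+(G_{t+2}+G_t)\ln3\bigr). \]
   Context: $O_n=\sum_{j=1}^n\frac1{2j-1}$. $F_n$ and $L_n$ are the Fibonacci and Lucas numbers ($F_0=0,F_1=1$, $L_0=2,L_1=1$, $u_n=u_{n-1}+u_{n-2}$), extended to all integers by the recurrence. $\alpha=(1+\sqrt5)/2$, $\beta=-1/\alpha$. For numbers $a,b$ not both zero, the gibonacci sequence $G_j=G_j(a,b)$ is defined by $G_0=a$, $G_1=b$, $G_j=G_{j-1}+G_{j-2}$, extended to negative indices by $G_{-j}=G_{-(j-2)}-G_{-(j-1)}$; equivalently $G_j=\frac{(b-a\beta)\alpha^j+(a\alpha-b)\beta^j}{\alpha-\beta}$. *)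

From Stdlib Require Import Reals ZArith.
From Coquelicot Require Import Coquelicot.
Open Scope R_scope.

Fixpoint Odd_harm (n : nat) : R :=
  match n with
  | O => 0
  | S m => Odd_harm m + / (2 * INR (S m) - 1)
  end.

Fixpoint gib_pos (a b : R) (n : nat) : R :=
  match n with
  | O => a
  | S O => b
  | S ((S m) as k) => gib_pos a b k + gib_pos a b m
  end.

(* gib_neg a b n = G_{-n}: G_0 = a, G_{-1} = G_1 - G_0,
   G_{-(n+2)} = G_{-n} - G_{-(n+1)} *)
Fixpoint gib_neg (a b : R) (n : nat) : R :=
  match n with
  | O => a
  | S O => b - a
  | S ((S m) as k) => gib_neg a b m - gib_neg a b k
  end.

Definition gib (a b : R) (j : Z) : R :=
  if (0 <=? j)%Z then gib_pos a b (Z.to_nat j) else gib_neg a b (Z.to_nat (- j)).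

Definition Fib (j : Z) : R := gib 0 1 j.
Definition Luc (j : Z) : R := gib 2 1 j.

Definition alpha : R := (1 + sqrt 5) / 2.

Definition term (X : Z -> R) (t : Z) (n : nat) : R :=
  Binomial.C (2 * n)%nat n * Odd_harm n * X (2 * Z.of_nat n + t)%Z / 12 ^ n.

(* Let c(x) = sum_n C(2n,n) x^n and f(x) = sum_n C(2n,n) O_n x^n.  The recurrence
   (n+1) C(2n+2,n+1) = 2(2n+1) C(2n,n) gives (1-4x) c' = 2c and (1-4x) f' = 2f + 2c
   for |x| < 1/4, hence c(x) = 1/sqrt(1-4x) and f(x) = -ln(1-4x) / (2 sqrt(1-4x)).
   By Binet's formula G_{2n+t} = P alpha^t (alpha^2)^n + Q beta^t (beta^2)^n, so the
   series equals P alpha^t f(alpha^2/12) + Q beta^t f(beta^2/12).  Both roots phi of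
   phi^2 = phi + 1 satisfy 1 - phi^2/3 = 1/(3 phi^2), so f(phi^2/12) = (sqrt 3/2) |phi| ln(3 phi^2). *)

From Stdlib Require Import Reals ZArith Lra Lia.
From Coquelicot Require Import Coquelicot.
Open Scope R_scope.

Definition central_binom (n : nat) : R := Binomial.C (2 * n) n.

Definition binom_Odd_harm (n : nat) : R := central_binom n * Odd_harm n.

Lemma central_binom_0 : central_binom 0 = 1.
Proof. unfold central_binom, Binomial.C; simpl; field. Qed.

Lemma central_binom_succ n :
  INR (S n) * central_binom (S n) = 2 * (2 * INR n + 1) * central_binom n.
Proof.
  unfold central_binom, Binomial.C.
  replace (2 * S n - S n)%nat with (S n) by lia.
  replace (2 * n - n)%nat with n by lia.
  replace (2 * S n)%nat with (S (S (2 * n))) by lia.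
  rewrite !fact_simpl, !mult_INR, !S_INR, mult_INR; simpl (INR 2).
  assert (0 < INR (fact n)) by apply INR_fact_lt_0.
  assert (0 < INR (fact (2 * n))) by apply INR_fact_lt_0.
  pose proof (pos_INR n).
  field; split; lra.
Qed.

Lemma central_binom_pos n : 0 < central_binom n.
Proof.
  induction n as [|n IH]; [rewrite central_binom_0; lra|].
  pose proof (central_binom_succ n) as E. rewrite S_INR in E.
  pose proof (pos_INR n). nra.
Qed.

Lemma Odd_harm_succ n : Odd_harm (S n) = Odd_harm n + / (2 * INR n + 1).
Proof. cbn [Odd_harm]. rewrite S_INR. do 2 f_equal. ring. Qed.

Lemma Odd_harm_bounds n : 0 <= Odd_harm n <= INR n.
Proof.
  induction n as [|n IH]; [simpl; lra|].
  rewrite Odd_harm_succ, S_INR. pose proof (pos_INR n).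
  assert (0 < / (2 * INR n + 1) <= 1).
  { split; [apply Rinv_0_lt_compat; lra|].
    rewrite <- Rinv_1. apply Rinv_le_contravar; lra. }
  lra.
Qed.

Lemma binom_Odd_harm_succ n :
  INR (S n) * binom_Odd_harm (S n)
  = (4 * INR n + 2) * binom_Odd_harm n + 2 * central_binom n.
Proof.
  unfold binom_Odd_harm. rewrite <- Rmult_assoc, central_binom_succ, Odd_harm_succ.
  pose proof (pos_INR n). field. lra.
Qed.

Lemma CV_radius_dominated (a b : nat -> R) :
  (forall n, Rabs (a n) <= Rabs (b n)) -> Rbar_le (CV_radius b) (CV_radius a).
Proof.
  intros Hab.
  destruct (CV_radius_bounded a) as [Ua _].
  destruct (CV_radius_bounded b) as [_ Lb].
  apply Lb. intros r [M HM]. apply Ua. exists M. intros n.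
  eapply Rle_trans; [|apply (HM n)].
  rewrite !Rabs_mult. apply Rmult_le_compat_r; [apply Rabs_pos|apply Hab].
Qed.

Lemma central_binom_ratio n :
  central_binom (S n) / central_binom n = 4 - 2 / INR (S n).
Proof.
  pose proof (central_binom_pos n). pose proof (central_binom_succ n) as E.
  rewrite S_INR in *. pose proof (pos_INR n).
  apply (Rmult_eq_reg_l ((INR n + 1) * central_binom n)); [|nra].
  field_simplify; lra.
Qed.

Lemma CV_radius_central_binom : CV_radius central_binom = / 4.
Proof.
  apply CV_radius_finite_DAlembert; [intros n; pose proof (central_binom_pos n); lra|lra|].
  apply is_lim_seq_ext with (fun n => 4 - 2 * / INR (S n)).
  { intros n. rewrite Rabs_pos_eq, central_binom_ratio; [reflexivity|].
    pose proof (central_binom_pos n). pose proof (central_binom_pos (S n)).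
    apply Rlt_le, Rdiv_lt_0_compat; assumption. }
  assert (Hinv : is_lim_seq (fun n => / INR (S n)) 0).
  { apply (is_lim_seq_incr_1 (fun n => / INR n)).
    replace (Finite 0) with (Rbar_inv p_infty) by reflexivity.
    apply is_lim_seq_inv; [apply is_lim_seq_INR|discriminate]. }
  apply (is_lim_seq_scal_l _ 2) in Hinv. change (Rbar_mult 2 0) with (Finite (2 * 0)) in Hinv.
  pose proof (is_lim_seq_minus' _ _ _ _ (is_lim_seq_const 4) Hinv) as Hlim.
  rewrite Rmult_0_r, Rminus_0_r in Hlim. exact Hlim.
Qed.

Lemma CV_radius_binom_Odd_harm : Rbar_le (/ 4) (CV_radius binom_Odd_harm).
Proof.
  rewrite <- CV_radius_central_binom, <- (CV_radius_derive central_binom).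
  apply CV_radius_dominated. intros n. unfold PS_derive, binom_Odd_harm.
  rewrite central_binom_succ.
  pose proof (central_binom_pos n). pose proof (pos_INR n). pose proof (Odd_harm_bounds n).
  rewrite !Rabs_pos_eq; nra.
Qed.

Lemma PSeries_linear_ode (b e : nat -> R) (p q r x : R) :
  Rbar_lt (Rabs x) (CV_radius b) -> Rbar_lt (Rabs x) (CV_radius e) ->
  (forall n, INR (S n) * b (S n) = (p * INR n + q) * b n + r * e n) ->
  (1 - p * x) * PSeries (PS_derive b) x = q * PSeries b x + r * PSeries e x.
Proof.
  intros Hb He Hrec.
  assert (Hqb : ex_pseries (PS_scal q b) x)
    by (apply ex_pseries_scal; [apply Rmult_comm|apply CV_radius_inside, Hb]).
  assert (Hre : ex_pseries (PS_scal r e) x)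
    by (apply ex_pseries_scal; [apply Rmult_comm|apply CV_radius_inside, He]).
  assert (Hpd : ex_pseries (PS_scal p (PS_incr_1 (PS_derive b))) x)
    by (apply ex_pseries_scal; [apply Rmult_comm|apply ex_pseries_incr_1, ex_pseries_derive, Hb]).
  assert (Hcoef : forall n, PS_derive b n
    = PS_plus (PS_scal p (PS_incr_1 (PS_derive b))) (PS_plus (PS_scal q b) (PS_scal r e)) n).
  { intros [|n]; unfold PS_plus, PS_scal; simpl PS_incr_1; unfold PS_derive;
      rewrite Hrec, ?S_INR; simpl; unfold plus, scal, zero; simpl; unfold mult; simpl; ring. }
  assert (HD : PSeries (PS_derive b) x
    = p * (x * PSeries (PS_derive b) x) + (q * PSeries b x + r * PSeries e x)).
  { rewrite (PSeries_ext _ _ x Hcoef) at 1.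
    rewrite !PSeries_plus, !PSeries_scal, PSeries_incr_1;
      [reflexivity|exact Hqb|exact Hre|exact Hpd|apply ex_pseries_plus; [exact Hqb|exact Hre]]. }
  lra.
Qed.

Lemma is_derive_0_const (f : R -> R) (r : R) :
  (forall y, Rabs y < r -> is_derive f y 0) ->
  forall x, Rabs x < r -> f x = f 0.
Proof.
  intros Hd x Hx.
  assert (Hbetween : forall y, Rmin 0 x <= y <= Rmax 0 x -> Rabs y < r).
  { intros y. unfold Rmin, Rmax. destruct (Rle_dec 0 x); split_Rabs; lra. }
  destruct (MVT_gen f 0 x (fun _ => 0)) as [c [_ Hc]].
  - intros y Hy. apply Hd, Hbetween. lra.
  - intros y Hy. apply derivable_continuous_pt. exists 0.
    apply is_derive_Reals, Hd, Hbetween, Hy.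
  - lra.
Qed.

Lemma in_disk_central_binom x : Rabs x < / 4 -> Rbar_lt (Rabs x) (CV_radius central_binom).
Proof. rewrite CV_radius_central_binom. easy. Qed.

Lemma in_disk_binom_Odd_harm x : Rabs x < / 4 -> Rbar_lt (Rabs x) (CV_radius binom_Odd_harm).
Proof. intros Hx. eapply Rbar_lt_le_trans; [|apply CV_radius_binom_Odd_harm]. exact Hx. Qed.

Lemma central_binom_ode x : Rabs x < / 4 ->
  (1 - 4 * x) * PSeries (PS_derive central_binom) x = 2 * PSeries central_binom x.
Proof.
  intros Hx. rewrite (PSeries_linear_ode central_binom central_binom 4 2 0);
    [ring|apply in_disk_central_binom, Hx ..|].
  intros n. rewrite central_binom_succ. ring.
Qed.

Lemma binom_Odd_harm_ode x : Rabs x < / 4 ->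
  (1 - 4 * x) * PSeries (PS_derive binom_Odd_harm) x
  = 2 * PSeries binom_Odd_harm x + 2 * PSeries central_binom x.
Proof.
  intros Hx. apply PSeries_linear_ode;
    [apply in_disk_binom_Odd_harm, Hx|apply in_disk_central_binom, Hx|].
  intros n. rewrite binom_Odd_harm_succ. ring.
Qed.

Lemma PSeries_central_binom x : Rabs x < / 4 ->
  PSeries central_binom x * sqrt (1 - 4 * x) = 1.
Proof.
  intros Hx.
  rewrite (is_derive_0_const (fun y => PSeries central_binom y * sqrt (1 - 4 * y)) (/ 4));
    [|intros y Hy|exact Hx].
  - rewrite PSeries_0, central_binom_0, Rmult_0_r, Rminus_0_r, sqrt_1. ring.
  - assert (Hy' : 0 < 1 - 4 * y) by (revert Hy; split_Rabs; lra).
    auto_derive.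
    + split; [apply ex_derive_PSeries, in_disk_central_binom, Hy|split; [lra|exact I]].
    + rewrite Derive_PSeries by (apply in_disk_central_binom, Hy).
      replace (1 + - (4 * y)) with (1 - 4 * y) by ring.
      pose proof (central_binom_ode y Hy) as Hode.
      pose proof (sqrt_lt_R0 _ Hy') as Hs.
      rewrite <- (sqrt_sqrt _ (Rlt_le _ _ Hy')) in Hode.
      set (s := sqrt (1 - 4 * y)) in *.
      transitivity ((s * s * PSeries (PS_derive central_binom) y
                     - 2 * PSeries central_binom y) / s); [field; lra|].
      rewrite Hode. field. lra.
Qed.

Lemma PSeries_binom_Odd_harm x : Rabs x < / 4 ->
  PSeries binom_Odd_harm x * sqrt (1 - 4 * x) + ln (1 - 4 * x) / 2 = 0.
Proof.
  intros Hx.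
  rewrite (is_derive_0_const
             (fun y => PSeries binom_Odd_harm y * sqrt (1 - 4 * y) + ln (1 - 4 * y) / 2) (/ 4));
    [|intros y Hy|exact Hx].
  - rewrite PSeries_0, Rmult_0_r, Rminus_0_r, ln_1. unfold binom_Odd_harm. simpl. field.
  - assert (Hy' : 0 < 1 - 4 * y) by (revert Hy; split_Rabs; lra).
    auto_derive.
    + split; [apply ex_derive_PSeries, in_disk_binom_Odd_harm, Hy|repeat split; lra].
    + rewrite Derive_PSeries by (apply in_disk_binom_Odd_harm, Hy).
      replace (1 + - (4 * y)) with (1 - 4 * y) by ring.
      pose proof (binom_Odd_harm_ode y Hy) as Hode.
      pose proof (PSeries_central_binom y Hy) as HF.
      pose proof (sqrt_lt_R0 _ Hy') as Hs.
      pose proof (sqrt_sqrt _ (Rlt_le _ _ Hy')) as Hss.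
      set (s := sqrt (1 - 4 * y)) in *.
      rewrite <- Hss in Hode |- *.
      set (D := PSeries (PS_derive binom_Odd_harm) y) in *.
      set (A := PSeries binom_Odd_harm y) in *.
      set (F := PSeries central_binom y) in *.
      transitivity ((s * s * D - 2 * A - 2 * F) / s + 2 * (F * s - 1) / (s * s));
        [field; lra|].
      rewrite Hode, HF. field. lra.
Qed.

Lemma is_series_binom_Odd_harm x : Rabs x < / 4 ->
  is_series (fun n => binom_Odd_harm n * x ^ n) (- ln (1 - 4 * x) / (2 * sqrt (1 - 4 * x))).
Proof.
  intros Hx. apply (is_pseries_R binom_Odd_harm x).
  replace (- ln (1 - 4 * x) / (2 * sqrt (1 - 4 * x))) with (PSeries binom_Odd_harm x).
  - apply PSeries_correct, CV_radius_inside, in_disk_binom_Odd_harm, Hx.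
  - pose proof (PSeries_binom_Odd_harm x Hx).
    assert (0 < sqrt (1 - 4 * x)) by (apply sqrt_lt_R0; revert Hx; split_Rabs; lra).
    field_simplify_eq; lra.
Qed.

Lemma is_series_binom_Odd_harm_golden (phi : R) : phi * phi = phi + 1 ->
  is_series (fun n => binom_Odd_harm n * (phi * phi / 12) ^ n)
    (sqrt 3 / 2 * Rabs phi * (ln 3 + 2 * ln (Rabs phi))).
Proof.
  intros Hphi.
  assert (Hsq_lt : phi * phi < 3) by nra.
  assert (Habs : 0 < Rabs phi) by (apply Rabs_pos_lt; intros E; rewrite E in Hphi; lra).
  assert (Hsq : phi * phi = Rabs phi * Rabs phi) by (rewrite <- Rabs_mult, Rabs_pos_eq; nra).
  assert (Hdisk : 1 - 4 * (phi * phi / 12) = / (3 * (phi * phi))).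
  { field_simplify_eq; nra. }
  replace (sqrt 3 / 2 * Rabs phi * (ln 3 + 2 * ln (Rabs phi)))
    with (- ln (1 - 4 * (phi * phi / 12)) / (2 * sqrt (1 - 4 * (phi * phi / 12)))).
  - apply is_series_binom_Odd_harm. rewrite Rabs_pos_eq; nra.
  - rewrite Hdisk, sqrt_inv, ln_Rinv, Hsq, sqrt_mult, sqrt_square, !ln_mult; try nra.
    assert (0 < sqrt 3) by (apply sqrt_lt_R0; lra).
    field. split; lra.
Qed.

Definition beta : R := (1 - sqrt 5) / 2.

Lemma sqrt5_sqr : sqrt 5 * sqrt 5 = 5.
Proof. apply sqrt_sqrt; lra. Qed.

Lemma sqrt5_gt_1 : 1 < sqrt 5.
Proof. rewrite <- sqrt_1. apply sqrt_lt_1; lra. Qed.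

Lemma alpha_gt_1 : 1 < alpha.
Proof. unfold alpha. pose proof sqrt5_gt_1. lra. Qed.

Lemma alpha_sqr : alpha * alpha = alpha + 1.
Proof. unfold alpha. pose proof sqrt5_sqr. nra. Qed.

Lemma beta_sqr : beta * beta = beta + 1.
Proof. unfold beta. pose proof sqrt5_sqr. nra. Qed.

Lemma alpha_mul_beta : alpha * beta = -1.
Proof. unfold alpha, beta. pose proof sqrt5_sqr. nra. Qed.

Lemma alpha_sub_beta : alpha - beta = sqrt 5.
Proof. unfold alpha, beta. field. Qed.

Lemma inv_alpha : / alpha = - beta.
Proof.
  pose proof alpha_gt_1. pose proof alpha_mul_beta.
  apply (Rmult_eq_reg_l alpha); [rewrite Rinv_r|]; lra.
Qed.

Lemma beta_lt_0 : beta < 0.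
Proof. unfold beta. pose proof sqrt5_gt_1. lra. Qed.

Lemma inv_beta : / beta = - alpha.
Proof.
  pose proof beta_lt_0. pose proof alpha_mul_beta.
  apply (Rmult_eq_reg_l beta); [rewrite Rinv_r|]; lra.
Qed.

Lemma nat_ind2 (P : nat -> Prop) :
  P 0%nat -> P 1%nat -> (forall n, P n -> P (S n) -> P (S (S n))) -> forall n, P n.
Proof.
  intros H0 H1 HS n.
  enough (P n /\ P (S n)) by tauto.
  induction n as [|n [IH1 IH2]]; auto.
Qed.

Lemma pow_add2_golden (phi : R) n : phi * phi = phi + 1 ->
  phi ^ (S (S n)) = phi ^ (S n) + phi ^ n.
Proof. intros Hphi. simpl. rewrite <- Rmult_assoc, Hphi. ring. Qed.

Lemma pow_opp_add2_golden (phi : R) n : phi * phi = phi + 1 ->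
  (- phi) ^ (S (S n)) = (- phi) ^ n - (- phi) ^ (S n).
Proof. intros Hphi. simpl. replace (- phi * (- phi * (- phi) ^ n)) with (phi * phi * (- phi) ^ n)
  by ring. rewrite Hphi. ring. Qed.

Lemma powerRZ_double_add (x : R) (n : nat) (t : Z) : x <> 0 ->
  powerRZ x (2 * Z.of_nat n + t) = (x * x) ^ n * powerRZ x t.
Proof.
  intros Hx. rewrite powerRZ_add by exact Hx.
  replace (2 * Z.of_nat n)%Z with (Z.of_nat (2 * n)) by lia.
  rewrite <- pow_powerRZ, pow_mult. simpl (x ^ 2). rewrite Rmult_1_r. reflexivity.
Qed.

Lemma powerRZ_add2_add (x : R) (t : Z) : x <> 0 ->
  powerRZ x (t + 2) + powerRZ x t = (x + / x) * powerRZ x (t + 1).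
Proof. intros Hx. rewrite !powerRZ_add by exact Hx. simpl. field. exact Hx. Qed.

Lemma alpha_add_inv : alpha + / alpha = sqrt 5.
Proof. rewrite inv_alpha, <- alpha_sub_beta. ring. Qed.

Lemma beta_add_inv : beta + / beta = - sqrt 5.
Proof. rewrite inv_beta, <- alpha_sub_beta. ring. Qed.

Lemma sqrt15_mul : sqrt 15 = sqrt 3 * sqrt 5.
Proof. rewrite <- sqrt_mult by lra. f_equal. ring. Qed.

Lemma sqrt15_combination (G H : R) :
  sqrt 15 / 10 * (2 * sqrt 5 * G * ln alpha + H * ln 3)
  = sqrt 3 / 2 * (2 * G * ln alpha + H / sqrt 5 * ln 3).
Proof.
  pose proof sqrt5_gt_1.
  transitivity (sqrt 3 / 10 * (sqrt 5 * sqrt 5 * (2 * G * ln alpha)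
                               + sqrt 5 * sqrt 5 * (H / sqrt 5 * ln 3))).
  - rewrite sqrt15_mul. field. lra.
  - rewrite sqrt5_sqr. field. lra.
Qed.

Section Binet.

Variables a b : R.

Let P := (b - a * beta) / sqrt 5.
Let Q := (a * alpha - b) / sqrt 5.

Lemma gib_pos_binet n : gib_pos a b n = P * alpha ^ n + Q * beta ^ n.
Proof.
  assert (Hden : alpha - beta <> 0) by (rewrite alpha_sub_beta; pose proof sqrt5_gt_1; lra).
  induction n as [| |n IH0 IH1] using nat_ind2.
  - unfold P, Q. rewrite <- alpha_sub_beta. simpl. field. exact Hden.
  - unfold P, Q. rewrite <- alpha_sub_beta. simpl. field. exact Hden.
  - change (gib_pos a b (S (S n))) with (gib_pos a b (S n) + gib_pos a b n).
    rewrite IH0, IH1, (pow_add2_golden _ n alpha_sqr), (pow_add2_golden _ n beta_sqr).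
    ring.
Qed.

Lemma gib_neg_binet n : gib_neg a b n = P * (- beta) ^ n + Q * (- alpha) ^ n.
Proof.
  assert (Hden : alpha - beta <> 0) by (rewrite alpha_sub_beta; pose proof sqrt5_gt_1; lra).
  assert (Hsum : alpha + beta = 1) by (unfold alpha, beta; field).
  induction n as [| |n IH0 IH1] using nat_ind2.
  - unfold P, Q. rewrite <- alpha_sub_beta. simpl. field. exact Hden.
  - unfold P, Q. rewrite <- alpha_sub_beta. simpl.
    replace beta with (1 - alpha) in * by lra. field. exact Hden.
  - change (gib_neg a b (S (S n))) with (gib_neg a b n - gib_neg a b (S n)).
    rewrite IH0, IH1, (pow_opp_add2_golden _ n alpha_sqr), (pow_opp_add2_golden _ n beta_sqr).
    ring.
Qed.

Lemma gib_binet j : gib a b j = P * powerRZ alpha j + Q * powerRZ beta j.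
Proof.
  unfold gib. destruct (Z.leb_spec 0 j) as [Hj|Hj].
  - rewrite gib_pos_binet, !pow_powerRZ, Z2Nat.id by exact Hj. reflexivity.
  - rewrite gib_neg_binet.
    remember (Z.to_nat (- j)) as k.
    replace j with (- Z.of_nat k)%Z by lia.
    rewrite !powerRZ_neg', <- !pow_powerRZ, <- !pow_inv, inv_alpha, inv_beta.
    reflexivity.
Qed.

Lemma gib_add2_add t :
  gib a b (t + 2) + gib a b t = sqrt 5 * (P * powerRZ alpha (t + 1) - Q * powerRZ beta (t + 1)).
Proof.
  pose proof alpha_gt_1. pose proof beta_lt_0.
  rewrite !gib_binet.
  transitivity (P * (powerRZ alpha (t + 2) + powerRZ alpha t)
                + Q * (powerRZ beta (t + 2) + powerRZ beta t)); [ring|].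
  rewrite !powerRZ_add2_add, alpha_add_inv, beta_add_inv by lra. ring.
Qed.

Lemma term_gib_binet t n :
  term (gib a b) t n
  = binom_Odd_harm n * (alpha * alpha / 12) ^ n * (P * powerRZ alpha t)
    + binom_Odd_harm n * (beta * beta / 12) ^ n * (Q * powerRZ beta t).
Proof.
  pose proof alpha_gt_1. pose proof beta_lt_0.
  unfold term, binom_Odd_harm, central_binom.
  rewrite gib_binet, !powerRZ_double_add by lra.
  unfold Rdiv. rewrite !Rpow_mult_distr, !pow_inv. ring.
Qed.

Lemma is_series_term_gib t :
  is_series (term (gib a b) t)
    (sqrt 3 / 2 * (2 * gib a b (t + 1) * ln alpha + (gib a b (t + 2) + gib a b t) / sqrt 5 * ln 3)).
Proof.
  pose proof alpha_gt_1. pose proof beta_lt_0. pose proof sqrt5_gt_1.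
  eapply is_series_ext; [intros n; symmetry; apply term_gib_binet|].
  replace (sqrt 3 / 2 * (2 * gib a b (t + 1) * ln alpha + (gib a b (t + 2) + gib a b t) / sqrt 5 * ln 3))
    with (sqrt 3 / 2 * Rabs alpha * (ln 3 + 2 * ln (Rabs alpha)) * (P * powerRZ alpha t)
          + sqrt 3 / 2 * Rabs beta * (ln 3 + 2 * ln (Rabs beta)) * (Q * powerRZ beta t)).
  - apply (is_series_plus (V := R_NormedModule));
      apply is_series_scal_r, is_series_binom_Odd_harm_golden; [apply alpha_sqr|apply beta_sqr].
  - rewrite gib_add2_add, gib_binet.
    rewrite Rabs_pos_eq, Rabs_left, <- inv_alpha, ln_Rinv, inv_alpha, !powerRZ_add,
      !powerRZ_1 by lra.
    field. lra.
Qed.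

End Binet.

Lemma sqrt5_div : 5 / sqrt 5 = sqrt 5.
Proof.
  pose proof sqrt5_gt_1.
  apply (Rmult_eq_reg_r (sqrt 5)); [|lra]. rewrite sqrt5_sqr. field. lra.
Qed.

Lemma one_sub_double_beta : 1 - 2 * beta = sqrt 5.
Proof. unfold beta. field. Qed.

Lemma double_alpha_sub_one : 2 * alpha - 1 = sqrt 5.
Proof. unfold alpha. field. Qed.

Lemma Fib_binet j : Fib j = (powerRZ alpha j - powerRZ beta j) / sqrt 5.
Proof. pose proof sqrt5_gt_1. unfold Fib. rewrite gib_binet. field. lra. Qed.

Lemma Luc_binet j : Luc j = powerRZ alpha j + powerRZ beta j.
Proof.
  pose proof sqrt5_gt_1.
  unfold Luc. rewrite gib_binet, one_sub_double_beta, double_alpha_sub_one. field. lra.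
Qed.

Lemma Fib_add2_add t : Fib (t + 2) + Fib t = Luc (t + 1).
Proof.
  pose proof sqrt5_gt_1. unfold Fib. rewrite gib_add2_add, Luc_binet. field. lra.
Qed.

Lemma Luc_add2_add t : Luc (t + 2) + Luc t = 5 * Fib (t + 1).
Proof.
  pose proof sqrt5_gt_1.
  unfold Luc. rewrite gib_add2_add, one_sub_double_beta, double_alpha_sub_one, Fib_binet.
  transitivity (sqrt 5 * sqrt 5 * ((powerRZ alpha (t + 1) - powerRZ beta (t + 1)) / sqrt 5)).
  - field. lra.
  - rewrite sqrt5_sqr. reflexivity.
Qed.

Lemma term_0 (X : Z -> R) t : term X t 0 = 0.
Proof. unfold term. simpl. field. Qed.

Lemma is_series_term_gib_succ a b t :
  is_series (fun k => term (gib a b) t (S k))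
    (sqrt 15 / 10 * (2 * sqrt 5 * gib a b (t + 1) * ln alpha
                     + (gib a b (t + 2) + gib a b t) * ln 3)).
Proof.
  apply is_series_incr_1.
  rewrite term_0. change (plus ?V 0) with (plus V zero).
  rewrite plus_zero_r, sqrt15_combination. apply is_series_term_gib.
Qed.

Theorem theorem17 :
  forall t : Z,
    is_series (fun k : nat => term Luc t (S k))
      (sqrt 3 / 2 * (2 * Luc (t + 1)%Z * ln alpha + sqrt 5 * Fib (t + 1)%Z * ln 3))
    /\ is_series (fun k : nat => term Fib t (S k))
      (sqrt 15 / 10 * (2 * sqrt 5 * Fib (t + 1)%Z * ln alpha + Luc (t + 1)%Z * ln 3))
    /\ (forall a b : R, ~ (a = 0 /\ b = 0) ->
         is_series (fun k : nat => term (gib a b) t (S k))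
           (sqrt 15 / 10 * (2 * sqrt 5 * gib a b (t + 1)%Z * ln alpha
                            + (gib a b (t + 2)%Z + gib a b t) * ln 3))).
Proof.
  intros t. split; [|split].
  - replace (sqrt 3 / 2 * (2 * Luc (t + 1)%Z * ln alpha + sqrt 5 * Fib (t + 1)%Z * ln 3))
      with (sqrt 15 / 10 * (2 * sqrt 5 * Luc (t + 1)%Z * ln alpha + (Luc (t + 2) + Luc t) * ln 3)).
    + apply is_series_term_gib_succ.
    + pose proof sqrt5_gt_1.
      rewrite sqrt15_combination, Luc_add2_add.
      replace (5 * Fib (t + 1) / sqrt 5) with (5 / sqrt 5 * Fib (t + 1)) by (field; lra).
      rewrite sqrt5_div. reflexivity.
  - rewrite <- Fib_add2_add. apply is_series_term_gib_succ.
  - (* the identity also holds for the zero sequence *)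
    intros a b _. apply is_series_term_gib_succ.
Qed.
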